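(* Let $\lambda(x):=u(x)/u'(x)$ for $x\ge 0$, and assume $\lambda$ is continuously differentiable. In the first-price auction model with $n\ge 2$ bidders described in the context, the symmetric equilibrium bidding strategy $\beta_n$ satisfies, for all $v\in(\underline v,\overline v]$, the differential equation $$\frac{u[v-\beta_n(v)]}{u'[v-\beta_n(v)]}=\frac{D[F_0(v)]}{D'[F_0(v)]}\cdot\frac{\beta_n'(v)}{(n-1)f_0(v)},$$ together with the boundary conditions $\beta_n(\underline v)=\underline v$ and $$\beta_n'(\underline v)=\frac{(n-1)\lambda'(0)}{(n-1)\lambda'(0)+1}.$$
   Context: An indivisible object is sold by a first-price auction without reserve price to $n\ge2$ bidders; the highest bidder wins and pays her bid. Bidder values $v_1,\dots,v_n$ are i.i.d. from a distribution $F_0$ on $[\underline v,\overline v]$ with continuous density $f_0>0$. All bidders have the same utility $u:\mathbb R_+\to\mathbb R_+$ with $u'>0$, $u''\le 0$, $u(0)=0$; the winner with value $v$ and bid $b$ gets $u(v-b)$, losers get $u(0)=0$. Bidders do not know $F_0$; they have maxmin expected utility with respect to a (commonly known) weakly compact convex set $\Gamma$ of strictly increasing, continuously differentiable distribution functions on $[\underline v,\overline v]$ containing $F_0$, which has a least element $F^*\in\Gamma$ (i.e. $F^*(v)\le F(v)$ for all $F\in\Gamma$ and all $v$) with density $f^*>0$. Define $D:[0,1]\to[0,1]$ by $D(\gamma):=F^*(F_0^{-1}(\gamma))$, so $D[F_0(v)]=F^*(v)=\min_{F\in\Gamma}F(v)$; $D$ is continuously differentiable, strictly increasing, $D(0)=0$,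 $D(1)=1$, $D(\gamma)\le\gamma$, $D'(0)>0$. A symmetric (pure-strategy Bayesian Nash) equilibrium is a strictly increasing, differentiable $\beta_n:[\underline v,\overline v]\to\mathbb R$ such that, for every $v$, $x=v$ maximizes $\min_{F\in\Gamma} u[v-\beta_n(x)]F(x)^{n-1}=u[v-\beta_n(x)]\,D[F_0(x)]^{n-1}$. *)

From Stdlib Require Import Reals Lra.
Open Scope R_scope.

Definition deriv_within (P : R -> Prop) (f : R -> R) (x l : R) : Prop :=
  forall eps, 0 < eps -> exists delta, 0 < delta /\
    forall y, P y -> y <> x -> Rabs (y - x) < delta ->
      Rabs ((f y - f x) / (y - x) - l) < eps.

Definition cont_within (P : R -> Prop) (g : R -> R) (x : R) : Prop :=
  forall eps, 0 < eps -> exists delta, 0 < delta /\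
    forall y, P y -> Rabs (y - x) < delta -> Rabs (g y - g x) < eps.

Definition nonneg_dom (x : R) : Prop := 0 <= x.
Definition Icc (a b : R) (x : R) : Prop := a <= x <= b.

(* Symmetric equilibrium in the (already reduced) maxmin form of the paper:
   for every value v, reporting x = v maximizes u[v - beta x] * D[F0 x]^(n-1)
   over all types x whose bid is feasible (v - beta x >= 0, the domain of u). *)
Definition sym_equilibrium (n : nat) (vl vh : R) (u F0 D beta : R -> R) : Prop :=
  forall v, Icc vl vh v ->
    0 <= v - beta v /\
    forall x, Icc vl vh x -> beta x <= v ->
      u (v - beta x) * (D (F0 x)) ^ (n - 1)
        <= u (v - beta v) * (D (F0 v)) ^ (n - 1).

From Stdlib Require Import Reals Lra Lia.
Open Scope R_scope.

(* The payoff u(v - beta x) F*(x)^(n-1) of type v reporting x is maximal at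
   x = v.  Type t not gaining by reporting some x < t, and lower types v < t not
   gaining by reporting t, give left derivatives at t of opposite signs; both
   equal the marginal payoff, which therefore vanishes: this is the differential
   equation.  At the bottom type the winning probability is 0, which forces
   beta(vl) = vl.  Letting v decrease to vl in the differential equation, beta'(v)
   tends to (n-1) lambda'(0) (1 - beta'(vl)), the ratio of the slopes of
   lambda(v - beta v) and of F*(v); by the mean value theorem a one-sided
   derivative agrees with such a limit, which gives the boundary slope. *)

Lemma deriv_within_limit P f x l :
  deriv_within P f x l <->
  limit1_in (fun y => (f y - f x) / (y - x)) (fun y => P y /\ y <> x) l x.
Proof.
  unfold deriv_within, limit1_in, limit_in; simpl; unfold R_dist; split.
  - intros H eps Heps; destruct (H eps Heps) as [d [Hd Hy]].
    exists d; split; [lra|]; intros y [[Py Hyx] Hyd]; auto.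
  - intros H eps Heps; destruct (H eps Heps) as [d [Hd Hy]].
    exists d; split; [lra|]; intros y Py Hyx Hyd; auto.
Qed.

Lemma cont_within_limit P g x : cont_within P g x <-> limit1_in g P (g x) x.
Proof.
  unfold cont_within, limit1_in, limit_in; simpl; unfold R_dist; split.
  - intros H eps Heps; destruct (H eps Heps) as [d [Hd Hy]].
    exists d; split; [lra|]; intros y [Py Hyd]; auto.
  - intros H eps Heps; destruct (H eps Heps) as [d [Hd Hy]].
    exists d; split; [lra|]; intros y Py Hyd; auto.
Qed.

Lemma deriv_within_subdomain P Q f x l :
  (forall y, Q y -> P y) -> deriv_within P f x l -> deriv_within Q f x l.
Proof.
  intros HQP H eps Heps; destruct (H eps Heps) as [d [Hd Hy]].
  exists d; split; auto.
Qed.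

Lemma deriv_within_ext P f g x l :
  P x -> (forall y, P y -> f y = g y) -> deriv_within P f x l -> deriv_within P g x l.
Proof.
  intros Px Hfg H eps Heps; destruct (H eps Heps) as [d [Hd Hy]].
  exists d; split; auto; intros y Py Hyx Hyd; rewrite <- !Hfg; auto.
Qed.

Lemma deriv_within_continuous P f x l : deriv_within P f x l -> cont_within P f x.
Proof.
  rewrite deriv_within_limit; intros H.
  assert (Hlim : limit1_in (fun y => (f y - f x) / (y - x) * (y - x))
                   (fun y => P y /\ y <> x) (l * (x - x)) x).
  { apply limit_mul; [exact H|]. apply limit_minus; [apply lim_x | exact (limit_free (fun _ => x) _ x x)]. }
  replace (l * (x - x)) with 0 in Hlim by ring.
  intros eps Heps; destruct (Hlim eps Heps) as [d [Hd Hy]].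
  exists d; split; auto; intros y Py Hyd.
  destruct (Req_dec y x) as [->|Hyx].
  - rewrite Rminus_diag, Rabs_R0; lra.
  - specialize (Hy y (conj (conj Py Hyx) Hyd)); simpl in Hy; unfold R_dist in Hy.
    replace (f y - f x) with ((f y - f x) / (y - x) * (y - x) - 0) by (field; lra).
    exact Hy.
Qed.

Lemma deriv_within_const P c x : deriv_within P (fun _ => c) x 0.
Proof.
  intros eps Heps; exists 1; split; [lra|]; intros y _ Hyx _.
  replace ((c - c) / (y - x) - 0) with 0 by (field; lra); rewrite Rabs_R0; lra.
Qed.

Lemma deriv_within_id P x : deriv_within P (fun y => y) x 1.
Proof.
  intros eps Heps; exists 1; split; [lra|]; intros y _ Hyx _.
  replace ((y - x) / (y - x) - 1) with 0 by (field; lra); rewrite Rabs_R0; lra.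
Qed.

Lemma deriv_within_minus P f g x l1 l2 :
  deriv_within P f x l1 -> deriv_within P g x l2 ->
  deriv_within P (fun y => f y - g y) x (l1 - l2).
Proof.
  rewrite !deriv_within_limit; intros Hf Hg.
  eapply limit1_ext; [|exact (limit_minus _ _ _ _ _ _ Hf Hg)].
  intros y [_ Hyx]; field; lra.
Qed.

Lemma deriv_within_mult P f g x l1 l2 :
  deriv_within P f x l1 -> deriv_within P g x l2 ->
  deriv_within P (fun y => f y * g y) x (l1 * g x + f x * l2).
Proof.
  intros Hf Hg.
  assert (Hgc := proj1 (cont_within_limit _ _ _) (deriv_within_continuous _ _ _ _ Hg)).
  rewrite deriv_within_limit in *.
  eapply limit1_ext; [|apply limit_plus; apply limit_mul;
    [exact Hf | eapply limit1_imp; [|exact Hgc] | exact (limit_free (fun _ => f x) _ x x) | exact Hg]].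
  - intros y [_ Hyx]; field; lra.
  - intros y [Py _]; exact Py.
Qed.

Lemma deriv_within_pow P f x l k :
  deriv_within P f x l ->
  deriv_within P (fun y => f y ^ S k) x (INR (S k) * f x ^ k * l).
Proof.
  intros Hf; induction k as [|k IH].
  - replace (INR 1 * f x ^ 0 * l) with (l * 1 + f x * 0) by (simpl; ring).
    apply (deriv_within_mult P f (fun _ => 1)); [exact Hf | apply deriv_within_const].
  - replace (INR (S (S k)) * f x ^ S k * l)
      with (l * f x ^ S k + f x * (INR (S k) * f x ^ k * l)) by (rewrite (S_INR (S k)); simpl; ring).
    exact (deriv_within_mult _ _ _ _ _ _ Hf IH).
Qed.

Lemma deriv_within_comp P Q f g x l1 l2 :
  (forall y, P y -> Q (g y)) ->
  deriv_within P g x l1 -> deriv_within Q f (g x) l2 ->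
  deriv_within P (fun y => f (g y)) x (l2 * l1).
Proof.
  intros HPQ Hg Hf.
  assert (Hgc := proj1 (cont_within_limit _ _ _) (deriv_within_continuous _ _ _ _ Hg)).
  (* Caratheodory's form of the difference quotient: continuous at [g x], so it
     composes with [g] even where [g y = g x]. *)
  set (q := fun z => if Req_EM_T z (g x) then l2 else (f z - f (g x)) / (z - g x)).
  assert (Hq : limit1_in q Q l2 (g x)).
  { intros eps Heps; destruct (Hf eps Heps) as [d [Hd Hz]].
    exists d; split; [lra|]; intros z [Qz Hzd]; simpl in *; unfold R_dist in *; unfold q.
    destruct (Req_EM_T z (g x)) as [_|Hzx]; [rewrite Rminus_diag, Rabs_R0; lra | auto]. }
  rewrite deriv_within_limit in *.
  assert (Hqg := limit_comp g q (fun y => P y /\ y <> x) Q (g x) l2 x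
                  (limit1_imp _ _ _ _ _ (fun y (Hy : P y /\ y <> x) => proj1 Hy) Hgc) Hq).
  eapply limit1_ext; [|apply limit_mul; [eapply limit1_imp; [|exact Hqg] | exact Hg]].
  - intros y [Py Hyx]; unfold q.
    destruct (Req_EM_T (g y) (g x)) as [E|E].
    + rewrite E, !Rminus_diag; field; lra.
    + field; lra.
  - intros y [Py Hyx]; repeat split; auto.
Qed.

Lemma exists_near_left a b d : a < b -> 0 < d -> exists y, a <= y < b /\ b - y < d.
Proof.
  intros Hab Hd; exists (Rmax a (b - d / 2)).
  unfold Rmax; destruct (Rle_dec a (b - d / 2)); lra.
Qed.

Lemma exists_near_right a b d : a < b -> 0 < d -> exists y, a < y <= b /\ y - a < d.
Proof.
  intros Hab Hd; exists (Rmin b (a + d / 2)).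
  unfold Rmin; destruct (Rle_dec b (a + d / 2)); lra.
Qed.

Lemma deriv_within_Icc_unique a b f x l1 l2 :
  a < b -> Icc a b x ->
  deriv_within (Icc a b) f x l1 -> deriv_within (Icc a b) f x l2 -> l1 = l2.
Proof.
  unfold Icc; rewrite !deriv_within_limit; intros Hab Hx H1 H2.
  refine (single_limit _ _ _ _ _ _ H1 H2).
  intros alp Halp; unfold Rdist.
  destruct (Rlt_le_dec x b) as [Hxb|Hxb].
  - destruct (exists_near_right x b alp Hxb Halp) as [y Hy].
    exists y; repeat split; try lra; apply Rabs_def1; lra.
  - destruct (exists_near_left a b alp Hab Halp) as [y Hy].
    exists y; repeat split; try lra; apply Rabs_def1; lra.
Qed.

Lemma deriv_within_left_max_nonneg a t h L :
  a < t -> deriv_within (Icc a t) h t L ->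
  (forall v, Icc a t v -> h v <= h t) -> 0 <= L.
Proof.
  intros Hat Hd Hmax; apply Rnot_lt_le; intros HL.
  destruct (Hd (- L) ltac:(lra)) as [d [Hd0 Hslope]].
  destruct (exists_near_left a t d Hat Hd0) as [y Hy].
  assert (Iy : Icc a t y) by (unfold Icc; lra).
  specialize (Hslope y Iy ltac:(lra) ltac:(apply Rabs_def1; lra)).
  apply Rabs_def2 in Hslope.
  assert (0 <= (h y - h t) / (y - t)); [|lra].
  replace ((h y - h t) / (y - t)) with ((h t - h y) * / (t - y)) by (field; lra).
  apply Rmult_le_pos; [specialize (Hmax y Iy); lra | left; apply Rinv_0_lt_compat; lra].
Qed.

Definition clamp (a b x : R) : R := Rmax a (Rmin b x).

Lemma clamp_Icc a b x : a <= b -> Icc a b (clamp a b x).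
Proof. unfold clamp, Icc, Rmax, Rmin; intros; repeat destruct Rle_dec; lra. Qed.

Lemma clamp_id a b x : Icc a b x -> clamp a b x = x.
Proof. unfold clamp, Icc, Rmax, Rmin; intros; repeat destruct Rle_dec; lra. Qed.

Lemma clamp_dist a b x y : Icc a b y -> Rabs (clamp a b x - y) <= Rabs (x - y).
Proof.
  unfold clamp, Icc, Rmax, Rmin; intros.
  repeat destruct Rle_dec; unfold Rabs; repeat destruct Rcase_abs; lra.
Qed.

Lemma clamp_continuity_pt a b f x :
  a <= b -> Icc a b x -> cont_within (Icc a b) f x ->
  continuity_pt (fun y => f (clamp a b y)) x.
Proof.
  intros Hab Hx Hf eps Heps; destruct (Hf eps Heps) as [d [Hd Hy]].
  exists d; split; [lra|]; intros y [_ Hyd]; simpl in *; unfold R_dist in *.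
  rewrite (clamp_id a b x Hx).
  apply Hy; [apply clamp_Icc; exact Hab|].
  eapply Rle_lt_trans; [apply clamp_dist; exact Hx | exact Hyd].
Qed.

Lemma clamp_derivable_pt_lim a b f x l :
  a < x < b -> deriv_within (Icc a b) f x l ->
  derivable_pt_lim (fun y => f (clamp a b y)) x l.
Proof.
  intros Hx Hf eps Heps; destruct (Hf eps Heps) as [d [Hd Hy]].
  assert (Hpos : 0 < Rmin d (Rmin (x - a) (b - x))) by (repeat apply Rmin_glb_lt; lra).
  exists (mkposreal _ Hpos); intros h Hh Hhd; simpl in Hhd.
  assert (Hd1 := Rmin_l d (Rmin (x - a) (b - x))).
  assert (Hd2 := Rmin_l (x - a) (b - x)); assert (Hd3 := Rmin_r (x - a) (b - x)).
  assert (Hr := Rmin_r d (Rmin (x - a) (b - x))).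
  apply Rabs_def2 in Hhd.
  assert (Ixh : Icc a b (x + h)) by (unfold Icc; lra).
  rewrite !clamp_id by (unfold Icc; lra).
  replace h with (x + h - x) at 2 by ring.
  apply Hy; [exact Ixh | lra | apply Rabs_def1; lra].
Qed.

Lemma mean_value_within f df a b :
  a < b ->
  (forall x, Icc a b x -> cont_within (Icc a b) f x) ->
  (forall x, a < x < b -> deriv_within (Icc a b) f x (df x)) ->
  exists c, a < c < b /\ f b - f a = df c * (b - a).
Proof.
  intros Hab Hc Hd.
  (* Extending [f] constantly outside [a, b] provides the two-sided continuity at
     the endpoints that Stdlib's [MVT] asks for. *)
  set (g := fun y => f (clamp a b y)).
  assert (Hg : forall c, a < c < b -> derivable_pt_lim g c (df c))
    by (intros c Hc'; apply clamp_derivable_pt_lim; auto).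
  destruct (MVT g id a b (fun c Hc' => exist _ (df c) (Hg c Hc'))
              (fun c _ => derivable_pt_id c) Hab) as [c [Hc' E]].
  - intros c Hc'; apply clamp_continuity_pt; auto; lra.
  - intros c _; apply derivable_continuous_pt, derivable_pt_id.
  - exists c; split; [exact Hc'|].
    rewrite derive_pt_id in E; simpl in E; unfold g, id in E.
    rewrite !clamp_id in E by (unfold Icc; lra); lra.
Qed.

Lemma deriv_within_pos_increasing a b f df :
  (forall x, Icc a b x -> deriv_within (Icc a b) f x (df x)) ->
  (forall x, Icc a b x -> 0 < df x) ->
  forall x y, Icc a b x -> Icc a b y -> x < y -> f x < f y.
Proof.
  unfold Icc; intros Hd Hpos x y Hx Hy Hxy.
  assert (Hdxy : forall z, x <= z <= y -> deriv_within (Icc x y) f z (df z)).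
  { intros z Hz; apply deriv_within_subdomain with (Icc a b);
      [unfold Icc; intros; lra | apply Hd; lra]. }
  destruct (mean_value_within f df x y Hxy) as [c [Hc E]].
  - intros z Hz; exact (deriv_within_continuous _ _ _ _ (Hdxy z Hz)).
  - intros z Hz; apply Hdxy; lra.
  - assert (0 < df c * (y - x)) by (apply Rmult_lt_0_compat; [apply Hpos |]; lra).
    lra.
Qed.

Lemma strict_increasing_le (P : R -> Prop) f :
  (forall x y, P x -> P y -> x < y -> f x < f y) ->
  forall x y, P x -> P y -> x <= y -> f x <= f y.
Proof.
  intros Hf x y Px Py Hxy.
  destruct (Req_dec x y) as [->|Hne]; [lra | left; apply Hf; auto; lra].
Qed.

Lemma deriv_within_pos_maps_Icc a b f df :
  (forall x, Icc a b x -> deriv_within (Icc a b) f x (df x)) ->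
  (forall x, Icc a b x -> 0 < df x) ->
  forall x, Icc a b x -> Icc (f a) (f b) (f x).
Proof.
  intros Hd Hpos x Hx.
  assert (Hle := strict_increasing_le _ _ (deriv_within_pos_increasing a b f df Hd Hpos)).
  unfold Icc in *; split; apply Hle; unfold Icc; lra.
Qed.

Lemma deriv_within_Icc_comp_eq Q a b f g h x l l1 l2 :
  a < b -> Icc a b x ->
  (forall y, Icc a b y -> Q (g y)) -> (forall y, Icc a b y -> f (g y) = h y) ->
  deriv_within (Icc a b) h x l -> deriv_within (Icc a b) g x l1 ->
  deriv_within Q f (g x) l2 -> l = l2 * l1.
Proof.
  intros Hab Hx HQ Hfg Hh Hg Hf.
  apply (deriv_within_Icc_unique a b h x); auto.
  apply (deriv_within_ext _ (fun y => f (g y))); auto.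
  exact (deriv_within_comp _ _ f g x _ _ HQ Hg Hf).
Qed.

Lemma deriv_within_left_endpoint_limit a c f df L :
  a < c ->
  (forall w, Icc a c w -> deriv_within (Icc a c) f w (df w)) ->
  limit1_in df (fun v => a < v <= c) L a -> df a = L.
Proof.
  intros Hac Hd Hlim.
  destruct (Req_dec (df a) L) as [|Hne]; [assumption | exfalso].
  set (e := Rabs (df a - L) / 2).
  assert (He : 0 < e) by (assert (0 < Rabs (df a - L)) by (apply Rabs_pos_lt; lra); unfold e; lra).
  destruct (Hlim e He) as [d1 [Hd1 Hnear]].
  destruct (Hd a ltac:(unfold Icc; lra) e He) as [d2 [Hd2 Hslope]].
  destruct (exists_near_right a c (Rmin d1 d2) Hac ltac:(apply Rmin_glb_lt; lra))
    as [v [Hv Hva]].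
  assert (Hm1 := Rmin_l d1 d2); assert (Hm2 := Rmin_r d1 d2).
  assert (Hdav : forall z, a <= z <= v -> deriv_within (Icc a v) f z (df z)).
  { intros z Hz; apply deriv_within_subdomain with (Icc a c);
      [unfold Icc; intros; lra | apply Hd; unfold Icc; lra]. }
  destruct (mean_value_within f df a v ltac:(lra)) as [w [Hw E]].
  - intros z Hz; exact (deriv_within_continuous _ _ _ _ (Hdav z Hz)).
  - intros z Hz; apply Hdav; lra.
  - specialize (Hnear w); simpl in Hnear; unfold R_dist in Hnear.
    assert (Hwa : Rabs (w - a) < d1) by (apply Rabs_def1; lra).
    assert (Hwc : a < w <= c) by lra.
    specialize (Hnear (conj Hwc Hwa)).
    specialize (Hslope v ltac:(unfold Icc; lra) ltac:(lra) ltac:(apply Rabs_def1; lra)).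
    rewrite E in Hslope.
    replace (df w * (v - a) / (v - a)) with (df w) in Hslope by (field; lra).
    assert (Rabs (df a - L) <= Rabs (df w - df a) + Rabs (df w - L)); [|unfold e in *; lra].
    replace (df a - L) with (- (df w - df a) + (df w - L)) by ring.
    eapply Rle_trans; [apply Rabs_triang|]; rewrite Rabs_Ropp; lra.
Qed.

Section FirstPriceEquilibrium.

Variables (m : nat) (vl vh : R) (u du Fs fs beta dbeta : R -> R).

Hypothesis Hv : vl < vh.
Hypothesis Hu0 : u 0 = 0.
Hypothesis Hdu : forall x, 0 <= x -> deriv_within nonneg_dom u x (du x).
Hypothesis Hdupos : forall x, 0 <= x -> 0 < du x.
Hypothesis HFsl : Fs vl = 0.
Hypothesis HFs : forall v, Icc vl vh v -> deriv_within (Icc vl vh) Fs v (fs v).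
Hypothesis Hfspos : forall v, Icc vl vh v -> 0 < fs v.
Hypothesis Hbinc : forall x y, Icc vl vh x -> Icc vl vh y -> x < y -> beta x < beta y.
Hypothesis Hbd : forall v, Icc vl vh v -> deriv_within (Icc vl vh) beta v (dbeta v).
Hypothesis Hfeasible : forall v, Icc vl vh v -> 0 <= v - beta v.
(* [Fs x ^ S m] is the worst-case probability that the bid [beta x] beats the
   [n - 1 = S m] rival bids, i.e. [D[F0 x]^(n-1)] of the paper. *)
Hypothesis Hbest : forall v x, Icc vl vh v -> Icc vl vh x -> beta x <= v ->
  u (v - beta x) * Fs x ^ S m <= u (v - beta v) * Fs v ^ S m.

Lemma utility_pos c : 0 < c -> 0 < u c.
Proof.
  intros Hc; rewrite <- Hu0.
  apply (deriv_within_pos_increasing 0 c u du); unfold Icc; try lra.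
  - intros x Hx; apply deriv_within_subdomain with nonneg_dom;
      [unfold nonneg_dom, Icc; intros; lra | apply Hdu; lra].
  - intros x Hx; apply Hdupos; lra.
Qed.

Lemma worst_case_cdf_pos x : vl < x <= vh -> 0 < Fs x.
Proof.
  intros Hx; rewrite <- HFsl.
  apply (deriv_within_pos_increasing vl vh Fs fs); auto; unfold Icc; lra.
Qed.

Lemma bid_lowest_type : beta vl = vl.
Proof.
  assert (Ivl : Icc vl vh vl) by (unfold Icc; lra).
  assert (Hle := Hfeasible vl Ivl).
  destruct (Req_dec (beta vl) vl) as [|Hne]; [assumption | exfalso].
  destruct (deriv_within_continuous _ _ _ _ (Hbd vl Ivl) (vl - beta vl) ltac:(lra))
    as [d [Hd Hnear]].
  destruct (exists_near_right vl vh d Hv Hd) as [y Hy].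
  assert (Iy : Icc vl vh y) by (unfold Icc; lra).
  specialize (Hnear y Iy ltac:(apply Rabs_def1; lra)); apply Rabs_def2 in Hnear.
  specialize (Hbest vl y Ivl Iy ltac:(lra)).
  rewrite HFsl, pow_i, Rmult_0_r in Hbest by lia.
  assert (0 < u (vl - beta y) * Fs y ^ S m); [|lra].
  apply Rmult_lt_0_compat; [apply utility_pos; lra | apply pow_lt, worst_case_cdf_pos; lra].
Qed.

Lemma bid_le x y : Icc vl vh x -> Icc vl vh y -> x <= y -> beta x <= beta y.
Proof. exact (strict_increasing_le _ _ Hbinc x y). Qed.

Lemma bid_below_value t : vl < t <= vh -> vl <= beta t < t.
Proof.
  intros Ht; assert (It : Icc vl vh t) by (unfold Icc; lra).
  split; [rewrite <- bid_lowest_type; apply bid_le; unfold Icc; lra|].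
  assert (Hle := Hfeasible t It).
  destruct (Req_dec (beta t) t) as [Heq|]; [exfalso | lra].
  set (x := (vl + t) / 2).
  assert (Ix : Icc vl vh x) by (unfold Icc, x; lra).
  assert (beta x < beta t) by (apply Hbinc; auto; unfold x; lra).
  specialize (Hbest t x It Ix ltac:(lra)).
  rewrite Heq, Rminus_diag, Hu0, Rmult_0_l in Hbest.
  assert (0 < u (t - beta x) * Fs x ^ S m); [|lra].
  apply Rmult_lt_0_compat; [apply utility_pos; lra | apply pow_lt, worst_case_cdf_pos; unfold x; lra].
Qed.

(* The derivative at [x = t] of the payoff [u (t - beta x) * Fs x ^ S m]. *)
Definition marginal_payoff t :=
  u (t - beta t) * (INR (S m) * Fs t ^ m * fs t) - du (t - beta t) * dbeta t * Fs t ^ S m.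

(* Deviations are taken within [beta t, t], where every argument of [u] stays
   nonnegative. *)
Lemma marginal_payoff_nonneg t : vl < t <= vh -> 0 <= marginal_payoff t.
Proof.
  intros Ht; assert (Hbt := bid_below_value t Ht).
  assert (Isub : forall y, Icc (beta t) t y -> Icc vl vh y) by (unfold Icc; intros; lra).
  assert (It : Icc vl vh t) by (unfold Icc; lra).
  apply (deriv_within_left_max_nonneg (beta t) t (fun v => u (t - beta v) * Fs v ^ S m));
    [lra | |].
  - replace (marginal_payoff t) with
      (du (t - beta t) * (0 - dbeta t) * Fs t ^ S m + u (t - beta t) * (INR (S m) * Fs t ^ m * fs t))
      by (unfold marginal_payoff; ring).
    apply (deriv_within_mult _ (fun v => u (t - beta v)) (fun v => Fs v ^ S m)).
    + apply (deriv_within_comp _ nonneg_dom u (fun v => t - beta v)).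
      * intros y Hy; unfold nonneg_dom.
        assert (beta y <= beta t) by (apply bid_le; auto; unfold Icc in Hy; lra); lra.
      * apply deriv_within_minus; [apply deriv_within_const |].
        apply deriv_within_subdomain with (Icc vl vh); auto.
      * apply Hdu; lra.
    + apply deriv_within_pow, deriv_within_subdomain with (Icc vl vh); auto.
  - intros v Hv'; apply Hbest; auto.
    assert (beta v <= beta t) by (apply bid_le; auto; unfold Icc in Hv'; lra); lra.
Qed.

Lemma marginal_payoff_nonpos t : vl < t <= vh -> marginal_payoff t <= 0.
Proof.
  intros Ht; assert (Hbt := bid_below_value t Ht).
  assert (Isub : forall y, Icc (beta t) t y -> Icc vl vh y) by (unfold Icc; intros; lra).
  assert (It : Icc vl vh t) by (unfold Icc; lra).
  enough (0 <= - marginal_payoff t) by lra.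
  apply (deriv_within_left_max_nonneg (beta t) t
           (fun v => u (v - beta t) * Fs t ^ S m - u (v - beta v) * Fs v ^ S m));
    [lra | |].
  - replace (- marginal_payoff t) with
      ((du (t - beta t) * (1 - 0) * Fs t ^ S m + u (t - beta t) * 0)
       - (du (t - beta t) * (1 - dbeta t) * Fs t ^ S m
          + u (t - beta t) * (INR (S m) * Fs t ^ m * fs t)))
      by (unfold marginal_payoff; ring).
    apply deriv_within_minus.
    + apply (deriv_within_mult _ (fun v => u (v - beta t)) (fun _ => Fs t ^ S m));
        [|apply deriv_within_const].
      apply (deriv_within_comp _ nonneg_dom u (fun v => v - beta t)).
      * intros y Hy; unfold nonneg_dom, Icc in *; lra.
      * apply deriv_within_minus; [apply deriv_within_id | apply deriv_within_const].
      * apply Hdu; lra.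
    + apply (deriv_within_mult _ (fun v => u (v - beta v)) (fun v => Fs v ^ S m)).
      * apply (deriv_within_comp _ nonneg_dom u (fun v => v - beta v)).
        -- intros y Hy; apply Hfeasible; auto.
        -- apply deriv_within_minus; [apply deriv_within_id |].
           apply deriv_within_subdomain with (Icc vl vh); auto.
        -- apply Hdu; lra.
      * apply deriv_within_pow, deriv_within_subdomain with (Icc vl vh); auto.
  - intros v Hv'.
    assert (Hbv := Hbest v t (Isub v Hv') It ltac:(unfold Icc in Hv'; lra)).
    rewrite Rminus_diag; lra.
Qed.

Lemma first_order_condition t : vl < t <= vh ->
  INR (S m) * fs t * (u (t - beta t) / du (t - beta t)) = dbeta t * Fs t.
Proof.
  intros Ht.
  assert (Hzero : marginal_payoff t = 0)
    by (apply Rle_antisym; [apply marginal_payoff_nonpos | apply marginal_payoff_nonneg]; auto).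
  assert (Hdut : 0 < du (t - beta t)) by (apply Hdupos, Hfeasible; unfold Icc; lra).
  assert (HFm : 0 < Fs t ^ m) by (apply pow_lt, worst_case_cdf_pos; lra).
  transitivity (u (t - beta t) * (INR (S m) * Fs t ^ m * fs t) / (du (t - beta t) * Fs t ^ m));
    [field; lra|].
  unfold marginal_payoff in Hzero.
  replace (u (t - beta t) * (INR (S m) * Fs t ^ m * fs t))
    with (du (t - beta t) * dbeta t * Fs t ^ S m) by lra.
  simpl; field; lra.
Qed.

Lemma bid_slope_lowest_type dl :
  deriv_within nonneg_dom (fun y => u y / du y) 0 dl ->
  cont_within (Icc vl vh) fs vl ->
  dbeta vl = INR (S m) * dl / (INR (S m) * dl + 1).
Proof.
  intros Hlam Hfsc.
  assert (Ivl : Icc vl vh vl) by (unfold Icc; lra).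
  set (k := fun v => u (v - beta v) / du (v - beta v)).
  assert (Hk : deriv_within (Icc vl vh) k vl (dl * (1 - dbeta vl))).
  { apply (deriv_within_comp _ nonneg_dom (fun y => u y / du y) (fun v => v - beta v)).
    - exact Hfeasible.
    - apply deriv_within_minus; [apply deriv_within_id | apply Hbd; exact Ivl].
    - rewrite bid_lowest_type, Rminus_diag; exact Hlam. }
  assert (Hk0 : k vl = 0) by (unfold k; rewrite bid_lowest_type, Rminus_diag, Hu0; unfold Rdiv; ring).
  assert (Hright : forall v, vl < v <= vh -> Icc vl vh v /\ v <> vl)
    by (unfold Icc; intros; split; lra).
  assert (Lk := limit1_imp _ _ _ _ _ Hright (proj1 (deriv_within_limit _ _ _ _) Hk)).
  assert (LFs := limit1_imp _ _ _ _ _ Hright (proj1 (deriv_within_limit _ _ _ _) (HFs vl Ivl))).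
  assert (Lfs := limit1_imp _ _ _ _ _ (fun v Hv' => proj1 (Hright v Hv'))
                   (proj1 (cont_within_limit _ _ _) Hfsc)).
  assert (Hfsl := Hfspos vl Ivl).
  assert (Hlim : limit1_in dbeta (fun v => vl < v <= vh)
                   (INR (S m) * fs vl * (dl * (1 - dbeta vl)) * / fs vl) vl).
  { eapply limit1_ext; [|apply limit_mul; [apply limit_mul; [apply limit_mul |] |]];
      [| exact (limit_free (fun _ => INR (S m)) _ vl vl) | exact Lfs | exact Lk
       | apply limit_inv; [exact LFs | lra]].
    intros v Hv'; cbv beta; rewrite Hk0, HFsl.
    assert (HFv := worst_case_cdf_pos v Hv').
    assert (Hfoc := first_order_condition v Hv'); fold (k v) in Hfoc.
    replace (INR (S m) * fs v * ((k v - 0) / (v - vl)) * / ((Fs v - 0) / (v - vl)))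
      with (INR (S m) * fs v * k v / Fs v) by (field; lra).
    rewrite Hfoc; field; lra. }
  assert (E := deriv_within_left_endpoint_limit vl vh beta dbeta _ Hv Hbd Hlim).
  set (X := INR (S m) * dl) in *.
  assert (E' : dbeta vl = X * (1 - dbeta vl)) by (rewrite E at 1; unfold X; field; lra).
  assert (HX : X + 1 <> 0).
  { intros HX; replace X with (-1) in E' by lra; lra. }
  apply (Rmult_eq_reg_r (X + 1)); [|exact HX].
  replace (X / (X + 1) * (X + 1)) with X by (field; exact HX).
  nra.
Qed.

End FirstPriceEquilibrium.

Theorem lemma1
  (n : nat) (vl vh : R)
  (u du ddu : R -> R) (dlam : R -> R)
  (F0 f0 Fs fs D dD : R -> R)
  (beta dbeta : R -> R)
  (Hn : (2 <= n)%nat) (Hv : vl < vh)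
  (Hu0 : u 0 = 0)
  (Hupos : forall x, 0 <= x -> 0 <= u x)
  (Hdu : forall x, 0 <= x -> deriv_within nonneg_dom u x (du x))
  (Hdupos : forall x, 0 <= x -> 0 < du x)
  (Hddu : forall x, 0 <= x -> deriv_within nonneg_dom du x (ddu x))
  (Hddneg : forall x, 0 <= x -> ddu x <= 0)
  (Hlam : forall x, 0 <= x -> deriv_within nonneg_dom (fun y => u y / du y) x (dlam x))
  (Hlamc : forall x, 0 <= x -> cont_within nonneg_dom dlam x)
  (HF0l : F0 vl = 0) (HF0h : F0 vh = 1)
  (HF0 : forall v, Icc vl vh v -> deriv_within (Icc vl vh) F0 v (f0 v))
  (Hf0c : forall v, Icc vl vh v -> cont_within (Icc vl vh) f0 v)
  (Hf0pos : forall v, Icc vl vh v -> 0 < f0 v)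
  (HFsl : Fs vl = 0) (HFsh : Fs vh = 1)
  (HFs : forall v, Icc vl vh v -> deriv_within (Icc vl vh) Fs v (fs v))
  (Hfsc : forall v, Icc vl vh v -> cont_within (Icc vl vh) fs v)
  (Hfspos : forall v, Icc vl vh v -> 0 < fs v)
  (HDdef : forall v, Icc vl vh v -> D (F0 v) = Fs v)
  (HD : forall g, Icc 0 1 g -> deriv_within (Icc 0 1) D g (dD g))
  (HdDc : forall g, Icc 0 1 g -> cont_within (Icc 0 1) dD g)
  (HDinc : forall g h, Icc 0 1 g -> Icc 0 1 h -> g < h -> D g < D h)
  (HD0 : D 0 = 0) (HD1 : D 1 = 1)
  (HDle : forall g, Icc 0 1 g -> D g <= g)
  (HdD0 : 0 < dD 0)
  (Hbinc : forall x y, Icc vl vh x -> Icc vl vh y -> x < y -> beta x < beta y)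
  (Hbd : forall v, Icc vl vh v -> deriv_within (Icc vl vh) beta v (dbeta v))
  (Heq : sym_equilibrium n vl vh u F0 D beta) :
  (forall v, vl < v <= vh ->
     u (v - beta v) / du (v - beta v)
       = D (F0 v) / dD (F0 v) * (dbeta v / ((INR n - 1) * f0 v)))
  /\ beta vl = vl
  /\ dbeta vl = (INR n - 1) * dlam 0 / ((INR n - 1) * dlam 0 + 1).
Proof.
  destruct n as [|[|m]]; [lia | lia |].
  replace (INR (S (S m)) - 1) with (INR (S m)) by (rewrite (S_INR (S m)); ring).
  assert (Hfeasible : forall v, Icc vl vh v -> 0 <= v - beta v)
    by (intros v Iv; exact (proj1 (Heq v Iv))).
  assert (Hbest : forall v x, Icc vl vh v -> Icc vl vh x -> beta x <= v ->
            u (v - beta x) * Fs x ^ S m <= u (v - beta v) * Fs v ^ S m).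
  { intros v x Iv Ix Hx; rewrite <- !HDdef by assumption.
    replace (S m) with (S (S m) - 1)%nat by lia; exact (proj2 (Heq v Iv) x Ix Hx). }
  assert (HF0range : forall v, Icc vl vh v -> Icc 0 1 (F0 v)).
  { rewrite <- HF0l, <- HF0h; exact (deriv_within_pos_maps_Icc vl vh F0 f0 HF0 Hf0pos). }
  assert (Hdensity : forall v, Icc vl vh v -> fs v = dD (F0 v) * f0 v).
  { intros v Iv; apply (deriv_within_Icc_comp_eq (Icc 0 1) vl vh D F0 Fs v); auto. }
  split; [|split].
  - intros v Hv'; assert (Iv : Icc vl vh v) by (unfold Icc; lra).
    assert (Hfoc : INR (S m) * fs v * (u (v - beta v) / du (v - beta v)) = dbeta v * Fs v)
      by (apply first_order_condition with (vl := vl) (vh := vh); assumption).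
    assert (Hf0v := Hf0pos v Iv); assert (Hfsv := Hfspos v Iv).
    assert (HdDv : 0 < dD (F0 v)).
    { rewrite Hdensity in Hfsv by exact Iv.
      destruct (Rlt_le_dec 0 (dD (F0 v))); [assumption | nra]. }
    assert (Hdu' : 0 < du (v - beta v)) by (apply Hdupos, Hfeasible, Iv).
    assert (Hm : 0 < INR (S m)) by (apply lt_0_INR; lia).
    rewrite HDdef, Hdensity in * by exact Iv.
    apply (Rmult_eq_reg_l (INR (S m) * (dD (F0 v) * f0 v))); [|apply Rgt_not_eq; nra].
    rewrite Hfoc; field; repeat split; lra.
  - apply bid_lowest_type with (m := m) (vh := vh) (u := u) (du := du) (Fs := Fs) (fs := fs)
      (dbeta := dbeta); assumption.
  - apply bid_slope_lowest_type with (vh := vh) (u := u) (du := du) (Fs := Fs) (fs := fs)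
      (beta := beta); try assumption.
    + apply Hlam; lra.
    + apply Hfsc; unfold Icc; lra.
Qed.
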